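(* Let $\beta_1,\beta_2,P_D,R_{th},r_C,r_D>0$, and write $a=R_{th}/r_C$. Suppose $$r_C>2R_{th}\qquad\text{and}\qquad \beta_1\ln\big((1-2a)r_D\big)-\beta_2P_D\,a\ge 0.$$ Define - $c_1=\min\Big\{\underline{c},\ \dfrac{\beta_1\ln((1-2a)r_D)-\beta_2 aP_D}{1-2a}\Big\}$, - $c_2=\dfrac{\beta_2P_D}{2}+\dfrac{\beta_1\beta_2P_D}{\beta_2P_D-2\beta_1}$, - $\overline{c}=\dfrac{\beta_2P_D}{2}+\beta_1 r_D\,e^{-\left(1+\frac{\beta_2P_D}{2\beta_1}\right)}$, - $\underline{c}=\dfrac{\beta_2P_D}{2}+\dfrac{\beta_1 r_C}{r_C-2R_{th}}$. Let $$\mathcal{C}=\begin{cases}\{c_1,c_2\}, & \text{if } \underline{c}<c_2<\overline{c},\\ \{c_1\}, & \text{if } \overline{c}<\underline{c},\\ \{c_1,\overline{c},\underline{c}\}, & \text{otherwise,}\end{cases}$$ and $c^*=\arg\max_{c\in\mathcal{C}}U_C(\alpha^*(c),c)$. Then $(c^*,\alpha^*(c^* ))$ is the Stackelberg equilibrium. That is, $\alpha^*(\cdot)$ is the follower's best response, and $c^*$ solves the leader's problem $$\max_{c}\ U_C(\alpha^*(c),c)\quad\text{s.t.}\quad U_D(\alpha^*(c),c)\ge 0,\qquad c\ge 0 .$$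
   Context: Setting: a cell-edge user (CEU, the leader) charges price $c$ to a D2D pair (the follower). The D2D pair then chooses its TDMA allocation coefficient $\alpha\in(0,1/2)$. Two time fractions of length $\alpha$ are used to relay the CEU's data, and the remaining fraction $1-2\alpha$ is used for D2D transmission. Rates: - $r_C=\min\{\log_2(1+P_Ch_{ib}/N_0),\ \log_2(1+P_Ch_{ib}/N_0+P_Dg_{jb}/N_0)\}>0$. - The CEU rate is $R_C(\alpha)=\alpha r_C$. - $r_D=\log_2(1+P_Dg_j/N_0)>0$. - The D2D rate is $(1-2\alpha)r_D$. - $R_{th}>0$ is the CEU's rate requirement. Utilities: - D2D pair: $U_D(\alpha,c)=\beta_1\ln\big((1-2\alpha)r_D\big)-\beta_2P_D\alpha-c(1-2\alpha)$. - CEU: $U_C(\alpha,c)=\beta_1\ln(\alpha r_C)+c(1-2\alpha)$. Follower's best response: $\alpha^*(c)$ maximizes $U_D(\alpha,c)$ subject to $\alpha r_C\ge R_{th}$ and $0<\alpha<1/2$. Explicitly, $$\alpha^*(c)=\frac{R_{th}}{r_C}\quad\text{if } c\le \frac{\beta_2P_D}{2}+\frac{\beta_1 r_C}{r_C-2R_{th}},$$ and $\alpha^*(c)=\frac12-\frac{\beta_1}{2c-\beta_2P_D}$ otherwise. *)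

From Stdlib Require Import Reals List.
Open Scope R_scope.

Definition U_D (b1 b2 PD rD alpha c : R) : R :=
  b1 * ln ((1 - 2 * alpha) * rD) - b2 * PD * alpha - c * (1 - 2 * alpha).

Definition U_C (b1 rC alpha c : R) : R :=
  b1 * ln (alpha * rC) + c * (1 - 2 * alpha).

Definition c_low (b1 b2 PD rC Rth : R) : R :=
  b2 * PD / 2 + b1 * rC / (rC - 2 * Rth).

Definition alpha_star (b1 b2 PD rC Rth c : R) : R :=
  if Rle_dec c (c_low b1 b2 PD rC Rth) then Rth / rC
  else / 2 - b1 / (2 * c - b2 * PD).

Definition c_1 (b1 b2 PD rC rD Rth : R) : R :=
  let a := Rth / rC in
  Rmin (c_low b1 b2 PD rC Rth)
       ((b1 * ln ((1 - 2 * a) * rD) - b2 * a * PD) / (1 - 2 * a)).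

Definition c_2 (b1 b2 PD : R) : R :=
  b2 * PD / 2 + b1 * b2 * PD / (b2 * PD - 2 * b1).

Definition c_high (b1 b2 PD rD : R) : R :=
  b2 * PD / 2 + b1 * rD * exp (- (1 + b2 * PD / (2 * b1))).

Definition cand_set (b1 b2 PD rC rD Rth : R) : list R :=
  let cl := c_low b1 b2 PD rC Rth in
  let ch := c_high b1 b2 PD rD in
  let c2 := c_2 b1 b2 PD in
  let c1 := c_1 b1 b2 PD rC rD Rth in
  if Rlt_dec cl c2 then
    (if Rlt_dec c2 ch then c1 :: c2 :: nil
     else if Rlt_dec ch cl then c1 :: nil else c1 :: ch :: cl :: nil)
  else if Rlt_dec ch cl then c1 :: nil else c1 :: ch :: cl :: nil.

From Stdlib Require Import Reals List Lra.
Open Scope R_scope.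

(* Every concavity argument below reduces to the tangent inequality
   ln x <= ln y + (x - y)/y.  For a fixed price, U_D is concave in alpha, so its
   maximiser under alpha >= R_th/r_C is the stationary point clipped at R_th/r_C;
   the clipping is active exactly for c <= c_low.  On the clipped branch the leader's
   utility grows linearly in c and participation holds up to c_1.  On the interior
   branch participation holds up to c_high, and in the variable
   u = 1/(2c - b2 PD) the leader's utility is b1 ln(r_C (1/2 - b1 u)) + b1 + b1 b2 PD u,
   concave with stationary point c_2.  Hence every feasible price is dominated by one
   of c_1, c_2, c_high, c_low, and the case split defining the candidate set picks
   the relevant ones. *)

Lemma ln_le_tangent x y : 0 < x -> 0 < y -> ln x <= ln y + (x - y) / y.
Proof.
  intros hx hy.
  pose proof (exp_ineq1_le (ln x - ln y)) as H.
  unfold Rminus in H. rewrite exp_plus, exp_Ropp, !exp_ln in H by lra.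
  replace ((x - y) / y) with (x * / y - 1) by (field; lra). lra.
Qed.

Lemma exp_le_iff_le_ln x y : 0 < y -> (exp x <= y <-> x <= ln y).
Proof.
  intros hy. rewrite <- (exp_ln y hy) at 1. split; intros H.
  - destruct (Rle_or_lt x (ln y)) as [|Hlt]; [assumption|].
    apply exp_increasing in Hlt. lra.
  - destruct H as [Hlt| ->]; [left; apply exp_increasing|right]; auto.
Qed.

Lemma U_D_le_tangent b1 b2 PD rD c al be : 0 <= b1 -> 0 < rD -> al < / 2 -> be < / 2 ->
  U_D b1 b2 PD rD al c
  <= U_D b1 b2 PD rD be c + (al - be) * (2 * c - b2 * PD - 2 * b1 / (1 - 2 * be)).
Proof.
  intros hb1 hrD hal hbe. unfold U_D.
  assert (Hln := ln_le_tangent ((1 - 2 * al) * rD) ((1 - 2 * be) * rD)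
                   ltac:(nra) ltac:(nra)).
  replace (((1 - 2 * al) * rD - (1 - 2 * be) * rD) / ((1 - 2 * be) * rD))
    with (- (2 / (1 - 2 * be)) * (al - be)) in Hln by (field; lra).
  replace (2 * b1 / (1 - 2 * be)) with (b1 * (2 / (1 - 2 * be))) by (field; lra).
  apply (Rmult_le_compat_l b1) in Hln; [nra | assumption].
Qed.

Lemma U_D_nonneg_iff b1 b2 PD rD al c : al < / 2 ->
  U_D b1 b2 PD rD al c >= 0 <->
  c <= (b1 * ln ((1 - 2 * al) * rD) - b2 * al * PD) / (1 - 2 * al).
Proof.
  intros hal. set (K := (b1 * ln ((1 - 2 * al) * rD) - b2 * al * PD) / (1 - 2 * al)).
  replace (U_D b1 b2 PD rD al c) with ((1 - 2 * al) * (K - c))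
    by (unfold U_D, K; field; lra).
  split; intros; nra.
Qed.

Definition interior_response (b1 b2 PD c : R) : R := / 2 - b1 / (2 * c - b2 * PD).

Lemma U_D_interior_response b1 b2 PD rD c : 0 < 2 * c - b2 * PD ->
  U_D b1 b2 PD rD (interior_response b1 b2 PD c) c
  = b1 * ln (2 * b1 * rD / (2 * c - b2 * PD)) - b1 - b2 * PD / 2.
Proof.
  intros ht. unfold U_D, interior_response.
  replace ((1 - 2 * (/ 2 - b1 / (2 * c - b2 * PD))) * rD)
    with (2 * b1 * rD / (2 * c - b2 * PD)) by (field; lra).
  field. lra.
Qed.

Lemma U_D_interior_nonneg_iff b1 b2 PD rD c : 0 < b1 -> 0 < rD -> 0 < 2 * c - b2 * PD ->
  U_D b1 b2 PD rD (interior_response b1 b2 PD c) c >= 0 <-> c <= c_high b1 b2 PD rD.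
Proof.
  intros hb1 hrD ht. rewrite U_D_interior_response by assumption.
  set (E := 1 + b2 * PD / (2 * b1)).
  assert (hE : b1 + b2 * PD / 2 = b1 * E) by (unfold E; field; lra).
  assert (hcE : c <= c_high b1 b2 PD rD <-> exp E <= 2 * b1 * rD / (2 * c - b2 * PD)).
  { unfold c_high. fold E. rewrite exp_Ropp.
    assert (0 < exp E) by apply exp_pos.
    set (X := 2 * b1 * rD / (2 * c - b2 * PD)).
    assert (hX : X * (2 * c - b2 * PD) = 2 * b1 * rD) by (unfold X; field; lra).
    set (Y := b1 * rD * / exp E).
    assert (hY : Y * exp E = b1 * rD) by (unfold Y; field; lra).
    split; intros Hc; nra. }
  rewrite hcE, exp_le_iff_le_ln by (apply Rdiv_lt_0_compat; nra).
  split; intros H.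
  - apply (Rmult_le_reg_l b1); lra.
  - apply (Rmult_le_compat_l b1) in H; lra.
Qed.

(* As a function of u = 1/(2c - b2 PD) the payoff is concave; the hypothesis says
   that its slope at d points from c towards d. *)
Lemma U_C_interior_le b1 b2 PD rC c d : 0 < b1 -> 0 < rC ->
  2 * b1 < 2 * c - b2 * PD -> 2 * b1 < 2 * d - b2 * PD ->
  0 <= (d - c) * (2 * b1 * (b2 * PD) - (2 * d - b2 * PD) * (b2 * PD - 2 * b1)) ->
  U_C b1 rC (interior_response b1 b2 PD c) c <= U_C b1 rC (interior_response b1 b2 PD d) d.
Proof.
  intros hb1 hrC ht hs hslope. unfold U_C, interior_response.
  set (t := 2 * c - b2 * PD) in *. set (s := 2 * d - b2 * PD) in *.
  set (N := (d - c) * (2 * b1 * (b2 * PD) - s * (b2 * PD - 2 * b1))) in *.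
  set (x := (/ 2 - b1 / t) * rC). set (y := (/ 2 - b1 / s) * rC).
  assert (hx : 0 < x).
  { unfold x. replace (/ 2 - b1 / t) with ((t - 2 * b1) / (2 * t)) by (field; lra).
    apply Rmult_lt_0_compat; [apply Rdiv_lt_0_compat|]; lra. }
  assert (hy : 0 < y).
  { unfold y. replace (/ 2 - b1 / s) with ((s - 2 * b1) / (2 * s)) by (field; lra).
    apply Rmult_lt_0_compat; [apply Rdiv_lt_0_compat|]; lra. }
  assert (Hln := ln_le_tangent x y hx hy).
  assert (hgap : b1 * ((x - y) / y) + (c * (1 - 2 * (/ 2 - b1 / t)) - d * (1 - 2 * (/ 2 - b1 / s)))
                 = - (2 * b1) * (N / (t * s * (s - 2 * b1)))).
  { assert (hc : c = (t + b2 * PD) / 2) by (unfold t; field).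
    assert (hd : d = (s + b2 * PD) / 2) by (unfold s; field).
    unfold x, y, N. rewrite hc, hd. field. repeat split; lra. }
  assert (0 <= 2 * b1 * (N / (t * s * (s - 2 * b1)))).
  { apply Rmult_le_pos; [lra|]. apply Rmult_le_pos; [assumption|].
    left; apply Rinv_0_lt_compat, Rmult_lt_0_compat; [apply Rmult_lt_0_compat|]; lra. }
  apply (Rmult_le_compat_l b1) in Hln; [|lra].
  rewrite Rmult_plus_distr_l in Hln. lra.
Qed.

Section Stackelberg.

Variables b1 b2 PD Rth rC rD : R.

Local Notation a := (Rth / rC).
Local Notation c_lo := (c_low b1 b2 PD rC Rth).
Local Notation c_hi := (c_high b1 b2 PD rD).
Local Notation c1 := (c_1 b1 b2 PD rC rD Rth).
Local Notation c2 := (c_2 b1 b2 PD).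
Local Notation alpha c := (alpha_star b1 b2 PD rC Rth c).
Local Notation UD al c := (U_D b1 b2 PD rD al c).
Local Notation UC al c := (U_C b1 rC al c).
Local Notation cands := (cand_set b1 b2 PD rC rD Rth).

Lemma c_1_in_cand_set : In c1 cands.
Proof.
  unfold cand_set; cbv zeta.
  destruct (Rlt_dec _ _); [destruct (Rlt_dec _ _); [|destruct (Rlt_dec _ _)]|destruct (Rlt_dec _ _)];
    simpl; tauto.
Qed.

Lemma c_2_in_cand_set : c_lo < c2 < c_hi -> In c2 cands.
Proof.
  intros [h1 h2]. unfold cand_set; cbv zeta.
  destruct (Rlt_dec _ _); [destruct (Rlt_dec _ _)|]; try contradiction; simpl; tauto.
Qed.

Lemma c_high_c_low_in_cand_set : ~ (c_lo < c2 < c_hi) -> c_lo <= c_hi ->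
  In c_hi cands /\ In c_lo cands.
Proof.
  intros h1 h2. unfold cand_set; cbv zeta.
  destruct (Rlt_dec _ _); [destruct (Rlt_dec _ _); [tauto|destruct (Rlt_dec _ _)]|destruct (Rlt_dec _ _)];
    try lra; simpl; tauto.
Qed.

Lemma in_cand_set_cases d : In d cands ->
  d = c1 \/ (d = c2 /\ c_lo < c2 < c_hi) \/ ((d = c_hi \/ d = c_lo) /\ c_lo <= c_hi).
Proof.
  unfold cand_set; cbv zeta.
  destruct (Rlt_dec _ _); [destruct (Rlt_dec _ _); [|destruct (Rlt_dec _ _)]|destruct (Rlt_dec _ _)];
    simpl; intuition (subst; auto; lra).
Qed.

Lemma c_1_le_c_low : c1 <= c_lo.
Proof. unfold c_1; cbv zeta. apply Rmin_l. Qed.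

Lemma alpha_star_low c : c <= c_lo -> alpha c = a.
Proof. intros h. unfold alpha_star. destruct (Rle_dec _ _); [reflexivity|contradiction]. Qed.

Hypotheses (hb1 : 0 < b1) (hbPD : 0 < b2 * PD) (hRth : 0 < Rth) (hrC : 0 < rC)
  (hrD : 0 < rD) (hcap : rC > 2 * Rth).

Lemma rate_share_bounds : 0 < a < / 2.
Proof.
  split; [apply Rdiv_lt_0_compat; lra|].
  apply (Rmult_lt_reg_r rC); [lra|]. unfold Rdiv. rewrite Rmult_assoc, Rinv_l; lra.
Qed.

Lemma c_low_slope : 2 * b1 / (1 - 2 * a) = 2 * c_lo - b2 * PD.
Proof. unfold c_low. field. lra. Qed.

Lemma c_low_interior : 2 * b1 < 2 * c_lo - b2 * PD.
Proof.
  rewrite <- c_low_slope. destruct rate_share_bounds.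
  assert (0 < 4 * b1 * a / (1 - 2 * a)) by (apply Rdiv_lt_0_compat; nra).
  replace (2 * b1 / (1 - 2 * a)) with (2 * b1 + 4 * b1 * a / (1 - 2 * a)) by (field; lra).
  lra.
Qed.

Lemma alpha_star_high c : c_lo <= c -> alpha c = interior_response b1 b2 PD c.
Proof.
  intros h. unfold alpha_star, interior_response. destruct (Rle_dec _ _); [|reflexivity].
  replace c with c_lo by lra.
  rewrite <- c_low_slope. destruct rate_share_bounds. field. lra.
Qed.

Lemma alpha_star_best_response c :
  0 < alpha c < / 2 /\ alpha c * rC >= Rth /\
  (forall al, 0 < al < / 2 -> al * rC >= Rth -> UD al c <= UD (alpha c) c).
Proof.
  destruct rate_share_bounds as [ha0 ha2].
  assert (ha : a * rC = Rth) by (field; lra).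
  assert (hrate : forall al, al * rC >= Rth -> a <= al) by (intros; nra).
  destruct (Rle_dec c c_lo) as [hc|hc].
  - rewrite alpha_star_low by exact hc.
    split; [lra|]. split; [lra|].
    intros al hal hal_rate. apply hrate in hal_rate.
    eapply Rle_trans; [apply (U_D_le_tangent _ _ _ _ _ _ a); lra|].
    rewrite c_low_slope. nra.
  - rewrite alpha_star_high by lra. unfold interior_response.
    assert (ht : 2 * c_lo - b2 * PD < 2 * c - b2 * PD) by lra.
    pose proof c_low_interior as hlo.
    assert (hslope := c_low_slope).
    set (t := 2 * c - b2 * PD) in *.
    set (q := b1 / t).
    assert (hq : q * t = b1) by (unfold q; field; lra).
    assert (hlo_eq : (2 * c_lo - b2 * PD) * (1 - 2 * a) = 2 * b1).
    { rewrite <- hslope. field. lra. }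
    assert (0 < q < / 2) by (split; nra).
    assert (q <= (1 - 2 * a) / 2) by nra.
    split; [lra|]. split; [nra|].
    intros al hal _.
    eapply Rle_trans; [apply (U_D_le_tangent _ _ _ _ _ _ (/ 2 - q)); lra|].
    replace (2 * b1 / (1 - 2 * (/ 2 - q))) with t by (unfold q; field; lra).
    unfold t. lra.
Qed.

Lemma feasible_low_iff c : c <= c_lo -> (UD (alpha c) c >= 0 <-> c <= c1).
Proof.
  intros hc. rewrite alpha_star_low by exact hc. destruct rate_share_bounds.
  rewrite U_D_nonneg_iff by lra. unfold c_1; cbv zeta.
  split; intros Hc.
  - apply Rmin_glb; lra.
  - eapply Rle_trans; [exact Hc | apply Rmin_r].
Qed.

Lemma feasible_high_iff c : c_lo <= c -> (UD (alpha c) c >= 0 <-> c <= c_hi).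
Proof.
  intros hc. rewrite alpha_star_high by exact hc.
  pose proof c_low_interior. apply U_D_interior_nonneg_iff; lra.
Qed.

Lemma c_1_nonneg : b1 * ln ((1 - 2 * a) * rD) - b2 * PD * a >= 0 -> 0 <= c1.
Proof.
  intros hpos. pose proof c_low_interior.
  apply feasible_low_iff; [lra|].
  rewrite alpha_star_low by lra. unfold U_D. lra.
Qed.

Lemma cand_set_feasible d : b1 * ln ((1 - 2 * a) * rD) - b2 * PD * a >= 0 ->
  In d cands -> 0 <= d /\ UD (alpha d) d >= 0.
Proof.
  intros hpos hd. pose proof c_low_interior.
  pose proof c_1_le_c_low.
  destruct (in_cand_set_cases d hd) as [->|[[-> h]|[[-> | ->] h]]].
  - split; [apply c_1_nonneg, hpos|]. apply feasible_low_iff; lra.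
  - split; [lra|]. apply feasible_high_iff; lra.
  - split; [lra|]. apply feasible_high_iff; lra.
  - split; [lra|]. apply feasible_high_iff; lra.
Qed.

(* At b2 PD = 2 b1 the formula for c_2 divides by zero, and Rocq's junk value
   makes c_2 = b2 PD / 2. *)
Lemma c_2_le_half : b2 * PD <= 2 * b1 -> c2 <= b2 * PD / 2.
Proof.
  intros h. unfold c_2.
  destruct (Req_dec (b2 * PD) (2 * b1)) as [heq|hne].
  - replace (b2 * PD - 2 * b1) with 0 by lra. unfold Rdiv. rewrite Rinv_0. lra.
  - assert (b1 * b2 * PD / (b2 * PD - 2 * b1) < 0) by (apply Rdiv_pos_neg; nra).
    lra.
Qed.

Lemma c_2_stationary : 2 * b1 < b2 * PD ->
  (2 * c2 - b2 * PD) * (b2 * PD - 2 * b1) = 2 * b1 * (b2 * PD).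
Proof. intros h. unfold c_2. field. lra. Qed.

Lemma interior_dominated c : c_lo < c -> c <= c_hi ->
  exists d, In d cands /\ UC (alpha c) c <= UC (alpha d) d.
Proof.
  intros hlo hhi. pose proof c_low_interior.
  assert (hcmp : forall d, c_lo <= d ->
            0 <= (d - c) * (2 * b1 * (b2 * PD) - (2 * d - b2 * PD) * (b2 * PD - 2 * b1)) ->
            UC (alpha c) c <= UC (alpha d) d).
  { intros d hd hsl. rewrite !alpha_star_high by lra. apply U_C_interior_le; lra. }
  destruct (Rle_dec (b2 * PD) (2 * b1)) as [hsmall|hlarge].
  - pose proof (c_2_le_half hsmall).
    destruct (c_high_c_low_in_cand_set ltac:(lra) ltac:(lra)) as [hin _].
    exists c_hi. split; [exact hin|]. apply hcmp; [lra|].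
    apply Rmult_le_pos; [lra|].
    assert (0 <= (2 * c_hi - b2 * PD) * (2 * b1 - b2 * PD)) by (apply Rmult_le_pos; lra).
    nra.
  - pose proof (c_2_stationary ltac:(lra)) as hstat.
    destruct (Rle_dec c2 c_lo) as [h2lo|h2lo]; [|destruct (Rlt_dec c2 c_hi) as [h2hi|h2hi]].
    + destruct (c_high_c_low_in_cand_set ltac:(lra) ltac:(lra)) as [_ hin].
      exists c_lo. split; [exact hin|]. apply hcmp; [lra|].
      assert (2 * b1 * (b2 * PD) - (2 * c_lo - b2 * PD) * (b2 * PD - 2 * b1) <= 0)
        by (rewrite <- hstat; nra).
      nra.
    + exists c2. split; [apply c_2_in_cand_set; lra|]. apply hcmp; [lra|].
      rewrite hstat. lra.
    + destruct (c_high_c_low_in_cand_set ltac:(lra) ltac:(lra)) as [hin _].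
      exists c_hi. split; [exact hin|]. apply hcmp; [lra|].
      assert (0 <= 2 * b1 * (b2 * PD) - (2 * c_hi - b2 * PD) * (b2 * PD - 2 * b1))
        by (rewrite <- hstat; nra).
      nra.
Qed.

Lemma feasible_dominated c : UD (alpha c) c >= 0 ->
  exists d, In d cands /\ UC (alpha c) c <= UC (alpha d) d.
Proof.
  intros hc. destruct (Rle_dec c c_lo) as [hlo|hlo].
  - exists c1. split; [apply c_1_in_cand_set|].
    assert (c <= c1) by (apply feasible_low_iff; assumption).
    pose proof c_1_le_c_low.
    rewrite !alpha_star_low by lra. unfold U_C.
    destruct rate_share_bounds. nra.
  - apply interior_dominated; [lra|]. apply feasible_high_iff; lra.
Qed.

End Stackelberg.

Theorem theorem1 (b1 b2 PD Rth rC rD : R)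
  (hb1 : 0 < b1) (hb2 : 0 < b2) (hPD : 0 < PD) (hRth : 0 < Rth)
  (hrC : 0 < rC) (hrD : 0 < rD)
  (hcap : rC > 2 * Rth)
  (hpos : b1 * ln ((1 - 2 * (Rth / rC)) * rD) - b2 * PD * (Rth / rC) >= 0)
  (cstar : R)
  (hin : In cstar (cand_set b1 b2 PD rC rD Rth))
  (hmax : forall c, In c (cand_set b1 b2 PD rC rD Rth) ->
          U_C b1 rC (alpha_star b1 b2 PD rC Rth c) c
          <= U_C b1 rC (alpha_star b1 b2 PD rC Rth cstar) cstar) :
  (forall c,
     0 < alpha_star b1 b2 PD rC Rth c < / 2 /\
     alpha_star b1 b2 PD rC Rth c * rC >= Rth /\
     (forall alpha, 0 < alpha < / 2 -> alpha * rC >= Rth ->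
        U_D b1 b2 PD rD alpha c
        <= U_D b1 b2 PD rD (alpha_star b1 b2 PD rC Rth c) c)) /\
  (0 <= cstar /\
   U_D b1 b2 PD rD (alpha_star b1 b2 PD rC Rth cstar) cstar >= 0 /\
   (forall c, 0 <= c ->
      U_D b1 b2 PD rD (alpha_star b1 b2 PD rC Rth c) c >= 0 ->
      U_C b1 rC (alpha_star b1 b2 PD rC Rth c) c
      <= U_C b1 rC (alpha_star b1 b2 PD rC Rth cstar) cstar)).
Proof.
  assert (hbPD : 0 < b2 * PD) by (apply Rmult_lt_0_compat; assumption).
  split; [exact (alpha_star_best_response b1 b2 PD Rth rC rD hb1 hRth hrC hrD hcap)|].
  destruct (cand_set_feasible b1 b2 PD Rth rC rD hb1 hbPD hRth hrC hrD hcap cstar hpos hin)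
    as [hc0 hcfeas].
  split; [exact hc0|]. split; [exact hcfeas|].
  intros c _ hc.
  destruct (feasible_dominated b1 b2 PD Rth rC rD hb1 hbPD hRth hrC hrD hcap c hc)
    as (d & hd & hle).
  eapply Rle_trans; [exact hle | apply hmax, hd].
Qed.
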